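(* Let $\rho_{ABC},\tau_{AC},\theta_{BC},\omega_C$ be positive definite density operators on the indicated spaces and let $\mathcal{N}=\mathcal{N}_{A\to A'}$, $\mathcal{M}=\mathcal{M}_{B\to B'}$ be quantum channels. Then $$\begin{aligned} \Delta_{\max}(\rho_{ABC};\tau_{AC},\omega_C,\theta_{BC})&\ge\Delta_{\max}(\mathcal{M}(\rho_{ABC});\tau_{AC},\omega_C,\mathcal{M}(\theta_{BC})),\\ \Delta_{\max}(\rho_{ABC};\omega_C,\tau_{AC},\theta_{BC})&\ge\Delta_{\max}(\mathcal{M}(\rho_{ABC});\omega_C,\tau_{AC},\mathcal{M}(\theta_{BC})),\\ \Delta_{\max}(\rho_{ABC};\omega_C,\theta_{BC},\tau_{AC})&\ge\Delta_{\max}(\mathcal{N}(\rho_{ABC});\omega_C,\theta_{BC},\mathcal{N}(\tau_{AC})),\\ \Delta_{\max}(\rho_{ABC};\theta_{BC},\omega_C,\tau_{AC})&\ge\Delta_{\max}(\mathcal{N}(\rho_{ABC});\theta_{BC},\omega_C,\mathcal{N}(\tau_{AC})). \end{aligned}$$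
   Context: Finite-dimensional Hilbert spaces; natural log; operators on subsystems tensored with identities; negative powers taken on the support (generalized inverse). Set $e(\tau)=e(\theta)=+1$, $e(\omega)=-1$; for an ordered triple $(X,Y,Z)$ (a permutation of operators of the types $\tau_{AC},\omega_C,\theta_{BC}$) let $K_{-1}(X,Y,Z)=X^{-e_X/2}Y^{-e_Y/2}Z^{-e_Z}Y^{-e_Y/2}X^{-e_X/2}$ and $\Delta_{\max}(\rho;X,Y,Z)\equiv\log\|\rho^{1/2}K_{-1}(X,Y,Z)\rho^{1/2}\|_\infty$; equivalently, when $K_{-1}$ is invertible, $\Delta_{\max}(\rho;X,Y,Z)=\inf\{\lambda:\rho\le e^{\lambda}K_{-1}(X,Y,Z)^{-1}\}$. E.g. $\Delta_{\max}(\rho;\tau,\omega,\theta)=\log\|\rho^{1/2}\tau^{-1/2}\omega^{1/2}\theta^{-1}\omega^{1/2}\tau^{-1/2}\rho^{1/2}\|_\infty=\inf\{\lambda:\rho\le e^\lambda\tau^{1/2}\omega^{-1/2}\theta\omega^{-1/2}\tau^{1/2}\}$. *)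

(* Operators on a finite-dimensional Hilbert space with
   orthonormal basis indexed by a finType I are functions I -> I -> F, where
   F is an arbitrary numClosedFieldType (e.g. the complex numbers). *)
From Stdlib Require Import ClassicalEpsilon.
From HB Require Import structures.
From mathcomp Require Import all_boot all_order all_algebra.
Set Implicit Arguments. Unset Strict Implicit. Unset Printing Implicit Defensive.
Import Order.TTheory GRing.Theory Num.Theory.
Local Open Scope ring_scope.

Section QOps.
Variable F : numClosedFieldType.

Definition op (I : finType) := I -> I -> F.
Definition vec (I : finType) := I -> F.

Definition opmul {I : finType} (X Y : op I) : op I :=
  fun i j => \sum_k X i k * Y k j.
Definition opadj {I : finType} (X : op I) : op I := fun i j => (X j i)^*.
Definition op1 {I : finType} : op I := fun i j => (i == j)%:R.
Definition opdiag {I : finType} (d : vec I) : op I :=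
  fun i j => (i == j)%:R * d i.
Definition optr {I : finType} (X : op I) : F := \sum_i X i i.
Definition opapp {I : finType} (X : op I) (v : vec I) : vec I :=
  fun i => \sum_j X i j * v j.
Definition qform {I : finType} (X : op I) (v : vec I) : F :=
  \sum_i \sum_j (v i)^* * X i j * v j.

Definition hermitian {I : finType} (X : op I) : Prop := opadj X = X.
Definition psd {I : finType} (X : op I) : Prop :=
  hermitian X /\ forall v : vec I, 0 <= qform X v.
Definition pd {I : finType} (X : op I) : Prop :=
  hermitian X /\ forall v : vec I, v <> (fun _ => 0) -> 0 < qform X v.
Definition pd_density {I : finType} (X : op I) : Prop := pd X /\ optr X = 1.

Definition unitary {I : finType} (U : op I) : Prop :=
  opmul U (opadj U) = op1 /\ opmul (opadj U) U = op1.

Definition spec_decomp {I : finType} (X : op I) (ud : (op I * vec I)%type) : Prop :=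
  unitary ud.1 /\ (forall i, 0 <= ud.2 i) /\
  X = opmul (opmul ud.1 (opdiag ud.2)) (opadj ud.1).

(* x^(k/2) for x >= 0, with 0^(k/2) := 0 (powers taken on the support) *)
Definition hpow (k : int) (x : F) : F := if x == 0 then 0 else sqrtC x ^ k.

(* X^(k/2) for X positive semidefinite, negative powers on the support
   (generalized inverse), via functional calculus *)
Definition oppow {I : finType} (k : int) (X : op I) : op I :=
  let ud := epsilon (inhabits (op1, fun _ => 0)) (spec_decomp X) in
  opmul (opmul ud.1 (opdiag (fun i => hpow k (ud.2 i)))) (opadj ud.1).

Definition ampl {R A A' : finType} (N : op A -> op A') (X : op (R * A)%type)
  : op (R * A')%type := fun i j => N (fun a a' => X (i.1, a) (j.1, a')) i.2 j.2.
Definition linear_map {A A' : finType} (N : op A -> op A') : Prop :=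
  forall (c : F) (X Y : op A),
    N (fun i j => c * X i j + Y i j) = (fun i j => c * N X i j + N Y i j).
Definition completely_positive {A A' : finType} (N : op A -> op A') : Prop :=
  forall (n : nat) (X : op ('I_n * A)%type), psd X -> psd (ampl N X).
Definition trace_preserving {A A' : finType} (N : op A -> op A') : Prop :=
  forall X : op A, optr (N X) = optr X.
Definition channel {A A' : finType} (N : op A -> op A') : Prop :=
  [/\ linear_map N, completely_positive N & trace_preserving N].

Definition chanA {A A' B C : finType} (N : op A -> op A') (X : op (A * B * C)%type)
  : op (A' * B * C)%type :=
  fun i j => N (fun a a' => X (a, i.1.2, i.2) (a', j.1.2, j.2)) i.1.1 j.1.1.
Definition chanB {A B B' C : finType} (M : op B -> op B') (X : op (A * B * C)%type)
  : op (A * B' * C)%type :=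
  fun i j => M (fun b b' => X (i.1.1, b, i.2) (j.1.1, b', j.2)) i.1.2 j.1.2.
Definition chan1 {A A' C : finType} (N : op A -> op A') (X : op (A * C)%type)
  : op (A' * C)%type :=
  fun i j => N (fun a a' => X (a, i.2) (a', j.2)) i.1 j.1.

Definition embAC {A B C : finType} (X : op (A * C)%type) : op (A * B * C)%type :=
  fun i j => X (i.1.1, i.2) (j.1.1, j.2) * (i.1.2 == j.1.2)%:R.
Definition embBC {A B C : finType} (X : op (B * C)%type) : op (A * B * C)%type :=
  fun i j => X (i.1.2, i.2) (j.1.2, j.2) * (i.1.1 == j.1.1)%:R.
Definition embC {A B C : finType} (X : op C) : op (A * B * C)%type :=
  fun i j => X i.2 j.2 * (i.1 == j.1)%:R.

Inductive otype := Tau | Omega | Theta.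
Definition esign (t : otype) : int := if t is Omega then -1 else 1.

(* K_{-1}(X,Y,Z) = X^{-e_X/2} Y^{-e_Y/2} Z^{-e_Z} Y^{-e_Y/2} X^{-e_X/2};
   exponents of oppow are in halves *)
Definition Kminus1 {I : finType} (X Y Z : (op I * otype)%type) : op I :=
  let PX := oppow (- esign X.2) X.1 in
  let PY := oppow (- esign Y.2) Y.1 in
  let PZ := oppow (- (2 * esign Z.2)) Z.1 in
  opmul (opmul (opmul (opmul PX PY) PZ) PY) PX.

Definition vnorm2 {I : finType} (v : vec I) : F := \sum_i `|v i| ^+ 2.
(* ||Q||_oo <= c  (operator norm), for c >= 0 *)
Definition opnorm_le {I : finType} (Q : op I) (c : F) : Prop :=
  forall v : vec I, vnorm2 (opapp Q v) <= c ^+ 2 * vnorm2 v.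

(* exp(Delta_max(rho;X,Y,Z)) <= c, i.e. ||rho^{1/2} K_{-1} rho^{1/2}||_oo <= c *)
Definition expDmax_le {I : finType} (rho : op I) (X Y Z : (op I * otype)%type) (c : F)
  : Prop :=
  opnorm_le (opmul (opmul (oppow 1 rho) (Kminus1 X Y Z)) (oppow 1 rho)) c.

(* Delta_max(rho;X,Y,Z) >= Delta_max(rho';X',Y',Z'): since log is increasing,
   this says every upper bound c >= 0 of ||rho^{1/2}K rho^{1/2}||_oo is one of
   ||rho'^{1/2}K' rho'^{1/2}||_oo. *)
Definition Dmax_geq {I J : finType} (rho : op I) (X Y Z : (op I * otype)%type)
  (rho' : op J) (X' Y' Z' : (op J * otype)%type) : Prop :=
  forall c : F, 0 <= c -> expDmax_le rho X Y Z c -> expDmax_le rho' X' Y' Z' c.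

End QOps.

(* Write P := X^{-e_X/2} Y^{-e_Y/2} for the two outer factors of K_{-1}, so that
   K_{-1} = P Z^{-1} P^*.  With T := Z^{-1/2} P^* rho^{1/2} one has
   rho^{1/2} K_{-1} rho^{1/2} = T^* T, whose norm is that of
   T T^* = Z^{-1/2} (P^* rho P) Z^{-1/2}.  Hence, for invertible Z,
   exp Delta_max(rho; X, Y, Z) <= c  iff  P^* rho P <= c Z; for Z merely positive the
   implication from right to left survives, because Z^{-1/2} Z Z^{-1/2} is a projection.
   In each of the four inequalities the outer operators act trivially on the system
   the channel acts on, so the channel commutes with conjugation by P, and, being
   linear and completely positive, it maps P^* rho P <= c Z to
   P^* N(rho) P <= c N(Z). *)

From mathcomp Require Import all_boot all_order all_algebra.
From mathcomp Require Import ring.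
From mathcomp Require spectral.
From Stdlib Require Import FunctionalExtensionality ClassicalEpsilon Classical.
Set Implicit Arguments. Unset Strict Implicit. Unset Printing Implicit Defensive.
Import Order.TTheory GRing.Theory Num.Theory.
Local Open Scope ring_scope.

Ltac ext2 := let i := fresh "i" in let j := fresh "j" in
  apply: functional_extensionality => i; apply: functional_extensionality => j.

Section OperatorAlgebra.
Variable F : numClosedFieldType.
Local Notation op := (op F).
Local Notation vec := (vec F).

Definition dot {I : finType} (u v : vec I) : F := \sum_i (u i)^* * v i.

Definition sandwich {I : finType} (P X : op I) : op I := opmul (opmul P X) (opadj P).

Lemma sum_deltal {I : finType} (a : I) (f : I -> F) :
  \sum_(d : I) (a == d)%:R * f d = f a.
Proof.
rewrite (bigD1 a) //= eqxx mul1r big1 ?addr0 // => d /negbTE.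
by rewrite eq_sym => ->; rewrite mul0r.
Qed.

Lemma sum_deltar {I : finType} (a : I) (f : I -> F) :
  \sum_(d : I) f d * (d == a)%:R = f a.
Proof.
rewrite -[RHS](sum_deltal a); apply: eq_bigr => d _.
by rewrite mulrC eq_sym.
Qed.

Lemma opmulA {I : finType} (X Y Z : op I) :
  opmul (opmul X Y) Z = opmul X (opmul Y Z).
Proof.
ext2; rewrite /opmul.
under eq_bigr do rewrite mulr_suml.
rewrite exchange_big; apply: eq_bigr => l _; rewrite mulr_sumr.
by apply: eq_bigr => k _; rewrite mulrA.
Qed.

Lemma opmul1l {I : finType} (X : op I) : opmul (op1 F) X = X.
Proof. by ext2; rewrite /opmul /op1 sum_deltal. Qed.

Lemma opmul1r {I : finType} (X : op I) : opmul X (op1 F) = X.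
Proof. by ext2; rewrite /opmul /op1 sum_deltar. Qed.

Lemma opadjK {I : finType} (X : op I) : opadj (opadj X) = X.
Proof. by ext2; rewrite /opadj conjCK. Qed.

Lemma opadj_mul {I : finType} (X Y : op I) :
  opadj (opmul X Y) = opmul (opadj Y) (opadj X).
Proof.
ext2; rewrite /opadj /opmul rmorph_sum; apply: eq_bigr => k _.
by rewrite rmorphM mulrC.
Qed.

Lemma opmul_diagl {I : finType} (d : vec I) (W : op I) :
  opmul (opdiag d) W = fun i j => d i * W i j.
Proof.
ext2; rewrite /opmul /opdiag.
under eq_bigr do rewrite -mulrA.
by rewrite sum_deltal.
Qed.

Lemma opmul_diagr {I : finType} (W : op I) (d : vec I) :
  opmul W (opdiag d) = fun i j => W i j * d j.
Proof.
ext2; rewrite /opmul /opdiag.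
under eq_bigr do rewrite mulrCA eq_sym.
by rewrite sum_deltal.
Qed.

Lemma opmul_diag {I : finType} (d e : vec I) :
  opmul (opdiag d) (opdiag e) = opdiag (fun i => d i * e i).
Proof.
rewrite opmul_diagl; ext2; rewrite /opdiag mulrCA.
by case: eqP => [->|]; rewrite ?mul0r ?mulr0.
Qed.

Lemma opadj_diag {I : finType} (d : vec I) :
  opadj (opdiag d) = opdiag (fun i => (d i)^*).
Proof.
ext2; rewrite /opadj /opdiag rmorphM rmorph_nat eq_sym.
by case: eqP => [->|]; rewrite ?mul1r ?mul0r.
Qed.

Lemma sandwich_hermitian {I : finType} (P X : op I) :
  hermitian X -> hermitian (sandwich P X).
Proof. by move=> hX; rewrite /hermitian /sandwich !opadj_mul opadjK hX opmulA. Qed.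

Lemma opapp_mul {I : finType} (X Y : op I) v :
  opapp (opmul X Y) v = opapp X (opapp Y v).
Proof.
apply: functional_extensionality => i; rewrite /opapp /opmul.
under eq_bigr do rewrite mulr_suml.
rewrite exchange_big; apply: eq_bigr => k _; rewrite mulr_sumr.
by apply: eq_bigr => l _; rewrite mulrA.
Qed.

Lemma opapp1 {I : finType} (v : vec I) : opapp (op1 F) v = v.
Proof. by apply: functional_extensionality => i; rewrite /opapp /op1 sum_deltal. Qed.

Lemma dot_adj {I : finType} (X : op I) u v :
  dot u (opapp X v) = dot (opapp (opadj X) u) v.
Proof.
rewrite /dot /opapp /opadj.
under eq_bigr do rewrite mulr_sumr.
under [RHS]eq_bigr do rewrite rmorph_sum mulr_suml.
rewrite exchange_big; apply: eq_bigr => j _; apply: eq_bigr => i _.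
by rewrite rmorphM /= conjCK mulrA [_^* * _]mulrC.
Qed.

Lemma dot_conj {I : finType} (u v : vec I) : (dot u v)^* = dot v u.
Proof.
rewrite /dot rmorph_sum; apply: eq_bigr => i _.
by rewrite rmorphM /= conjCK mulrC.
Qed.

Lemma qformE {I : finType} (X : op I) v : qform X v = dot v (opapp X v).
Proof.
rewrite /qform /dot /opapp; apply: eq_bigr => i _; rewrite mulr_sumr.
by apply: eq_bigr => j _; rewrite mulrA.
Qed.

Lemma qform_sandwich {I : finType} (P X : op I) w :
  qform (sandwich P X) w = qform X (opapp (opadj P) w).
Proof. by rewrite !qformE !opapp_mul dot_adj. Qed.

Lemma vnorm2E {I : finType} (v : vec I) : vnorm2 v = dot v v.
Proof. by rewrite /vnorm2 /dot; apply: eq_bigr => i _; rewrite normCKC. Qed.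

Lemma vnorm2_ge0 {I : finType} (v : vec I) : 0 <= vnorm2 v.
Proof. by rewrite /vnorm2 sumr_ge0 // => i _; rewrite exprn_ge0. Qed.

Lemma vnorm2_eq0 {I : finType} (v : vec I) : vnorm2 v = 0 -> v = (fun _ => 0).
Proof.
rewrite /vnorm2 => H; apply: functional_extensionality => i.
have := psumr_eq0P (P := predT) (fun i _ => exprn_ge0 2 (normr_ge0 (v i))) H.
by move=> /(_ i isT) /eqP; rewrite expf_eq0 /= normr_eq0 => /eqP.
Qed.

Lemma vnorm2_app {I : finType} (X : op I) v :
  vnorm2 (opapp X v) = qform (opmul (opadj X) X) v.
Proof. by rewrite vnorm2E qformE opapp_mul [RHS]dot_adj opadjK. Qed.

Lemma dot_CauchySchwarz {I : finType} (u v : vec I) :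
  dot u v * dot v u <= dot u u * dot v v.
Proof.
set a := dot u u; set b := dot v v; set p := dot u v; set q := dot v u.
have a0 : 0 <= a by rewrite /a -vnorm2E vnorm2_ge0.
have [/eqP a_eq0|a_neq0] := boolP (a == 0).
  have u0 : u = (fun _ => 0) by apply: vnorm2_eq0; rewrite vnorm2E.
  have dot0 w : dot (fun _ => 0) w = 0 by rewrite /dot big1 // => i _; rewrite rmorph0 mul0r.
  by rewrite /p /q /a /b u0 !dot0 !mul0r.
have a_gt0 : 0 < a by rewrite lt_def a_neq0 a0.
have ca : a^* = a := geC0_conj a0.
have cp : p^* = q by rewrite /p dot_conj.
(* 0 <= |a v - p u|^2 = a (a b - p q) *)
pose w := fun i => a * v i - p * u i.
have E : dot w w = a * (a * b - p * q).
  have -> : dot w w = \sum_i (a * a * ((v i)^* * v i) - a * p * ((v i)^* * u i)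
       - a * q * ((u i)^* * v i) + p * q * ((u i)^* * u i)).
    by apply: eq_bigr => i _; rewrite /w rmorphB !rmorphM /= ca cp; ring.
  rewrite big_split /= !sumrB -!mulr_sumr.
  rewrite -/(dot v v) -/(dot v u) -/(dot u v) -/(dot u u) -/a -/b -/p -/q.
  ring.
by have := vnorm2_ge0 w; rewrite vnorm2E E pmulr_rge0 // subr_ge0.
Qed.

End OperatorAlgebra.

Section OperatorNorm.
Variable F : numClosedFieldType.
Local Notation op := (op F).
Local Notation vec := (vec F).

(* [op_bounded T c] says ||T||^2 <= c. *)
Definition op_bounded {I : finType} (T : op I) (c : F) : Prop :=
  forall v : vec I, vnorm2 (opapp T v) <= c * vnorm2 v.

Lemma op_bounded_adj {I : finType} (T : op I) (c : F) :
  0 <= c -> op_bounded T c -> op_bounded (opadj T) c.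
Proof.
move=> c0 HT w; set y := vnorm2 (opapp (opadj T) w).
have y0 : 0 <= y := vnorm2_ge0 _.
have yE : y = dot w (opapp T (opapp (opadj T) w)) by rewrite /y vnorm2E [RHS]dot_adj.
(* y^2 = |<w, T T^* w>|^2 <= |w|^2 |T (T^* w)|^2 <= |w|^2 c y *)
have := dot_CauchySchwarz w (opapp T (opapp (opadj T) w)).
rewrite -yE -(dot_conj w) -yE geC0_conj // -!vnorm2E -/y => yy.
have {}yy : y * y <= vnorm2 w * c * y.
  by rewrite (le_trans yy) // -mulrA ler_wpM2l ?vnorm2_ge0.
have [/eqP ->|y_neq0] := boolP (y == 0); first by rewrite mulr_ge0 ?vnorm2_ge0.
have y_gt0 : 0 < y by rewrite lt_def y_neq0 y0.
by rewrite -(ler_pM2r y_gt0) (le_trans yy) // [_ * c]mulrC.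
Qed.

Lemma opnorm_le_adjmulP {I : finType} (T : op I) (c : F) :
  0 <= c -> opnorm_le (opmul (opadj T) T) c <-> op_bounded T c.
Proof.
move=> c0; split=> [H v|HT v]; last first.
  rewrite opapp_mul (le_trans (op_bounded_adj c0 HT _)) // expr2 -mulrA.
  exact: ler_wpM2l.
set x := vnorm2 (opapp T v); have x0 : 0 <= x := vnorm2_ge0 _.
have xE : x = dot v (opapp (opmul (opadj T) T) v) by rewrite /x vnorm2_app qformE.
(* x^2 = |<v, T^* T v>|^2 <= |v|^2 |T^* T v|^2 <= (c |v|^2)^2 *)
have := dot_CauchySchwarz v (opapp (opmul (opadj T) T) v).
rewrite -xE -(dot_conj v) -xE geC0_conj // -!vnorm2E => xx.
have : x ^+ 2 <= (c * vnorm2 v) ^+ 2.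
  rewrite expr2 (le_trans xx) // exprMn [c ^+ 2 * _]mulrC expr2 -mulrA.
  by apply: ler_wpM2l; [exact: vnorm2_ge0 | rewrite mulrC; exact: H].
by rewrite ler_pXn2r // nnegrE // mulr_ge0 ?vnorm2_ge0.
Qed.

End OperatorNorm.

Section FunctionalCalculus.
Variable F : numClosedFieldType.
Local Notation op := (op F).
Local Notation vec := (vec F).

Definition spec_pow {I : finType} (k : int) (U : op I) (d : vec I) : op I :=
  opmul (opmul U (opdiag (fun i => hpow k (d i)))) (opadj U).

Lemma hpow_ge0 k (x : F) : 0 <= x -> 0 <= hpow k x.
Proof.
by move=> x0; rewrite /hpow; case: eqP => // _; rewrite exprz_ge0 // sqrtC_ge0.
Qed.

Lemma hpowD a b (x : F) : hpow a x * hpow b x = hpow (a + b) x.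
Proof.
rewrite /hpow; case: eqP => [_|/eqP x_neq0]; first by rewrite mul0r.
by rewrite expfzDr // sqrtC_eq0.
Qed.

Lemma hpow2 (x : F) : hpow 2 x = x.
Proof.
rewrite /hpow; case: eqP => [->//|_].
by rewrite -[X in _ ^ X]/(Posz 2%N) -exprnP sqrtCK.
Qed.

Lemma hpow0 (x : F) : hpow 0 x = (x != 0)%:R.
Proof. by rewrite /hpow; case: eqP. Qed.

Lemma spec_powD {I : finType} a b (U : op I) d : unitary U ->
  opmul (spec_pow a U d) (spec_pow b U d) = spec_pow (a + b) U d.
Proof.
move=> [_ UU]; rewrite /spec_pow !opmulA.
rewrite -[opmul (opadj U) (opmul U _)]opmulA UU opmul1l.
rewrite -[opmul (opdiag _) (opmul (opdiag _) _)]opmulA opmul_diag.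
suff -> : (fun i => hpow a (d i) * hpow b (d i)) = fun i => hpow (a + b) (d i) by [].
by apply: functional_extensionality => i; exact: hpowD.
Qed.

Lemma spec_pow_hermitian {I : finType} k (U : op I) d : (forall i, 0 <= d i) ->
  hermitian (spec_pow k U d).
Proof.
move=> d0; rewrite /hermitian /spec_pow !opadj_mul opadjK opadj_diag opmulA.
suff -> : (fun i => (hpow k (d i))^*) = fun i => hpow k (d i) by [].
by apply: functional_extensionality => i; rewrite geC0_conj ?hpow_ge0.
Qed.

Lemma spec_pow2 {I : finType} (U : op I) d :
  spec_pow 2 U d = opmul (opmul U (opdiag d)) (opadj U).
Proof.
rewrite /spec_pow (_ : (fun i => hpow 2 (d i)) = d) //.
by apply: functional_extensionality => i; rewrite hpow2.
Qed.

Lemma spec_pow_unique {I : finType} k (X U V : op I) (d e : vec I) :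
  spec_decomp X (U, d) -> spec_decomp X (V, e) -> spec_pow k U d = spec_pow k V e.
Proof.
move=> [[UU1 UU2] [/= d0 /= XU]] [[VV1 VV2] [/= e0 /= XV]].
set W := opmul (opadj V) U.
(* W intertwines diag d and diag e, hence also any function of them *)
have Wde : opmul W (opdiag d) = opmul (opdiag e) W.
  have -> : opmul W (opdiag d) = opmul (opmul (opadj V) X) U.
    by rewrite XU /W !opmulA UU2 opmul1r.
  by rewrite XV /W !opmulA -[opmul (opadj V) (opmul V _)]opmulA VV2 opmul1l.
have Wde_pow : opmul W (opdiag (fun i => hpow k (d i))) =
               opmul (opdiag (fun i => hpow k (e i))) W.
  move: Wde; rewrite !opmul_diagr !opmul_diagl => Wde; ext2.
  have /= Wij := congr1 (fun f => f i j) Wde.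
  have [->|ne] := eqVneq (d j) (e i); first by rewrite mulrC.
  have : W i j * (d j - e i) = 0 by rewrite mulrBr Wij [W i j * _]mulrC subrr.
  move/eqP; rewrite mulf_eq0 subr_eq0 (negbTE ne) orbF => /eqP ->.
  by rewrite mulr0 mul0r.
rewrite /spec_pow -[LHS]opmul1l -VV1 !opmulA.
rewrite -[opmul (opadj V) (opmul U _)]opmulA -/W.
by rewrite -[opmul W (opmul (opdiag _) _)]opmulA Wde_pow !opmulA UU1 opmul1r.
Qed.

Lemma oppowE {I : finType} k (X : op I) U d :
  spec_decomp X (U, d) -> oppow k X = spec_pow k U d.
Proof.
move=> sd; rewrite /oppow.
set ud := epsilon _ _.
have sd' : spec_decomp X ud.
  by apply: (epsilon_spec (inhabits (op1 F, fun _ => 0)) (spec_decomp X)); exists (U, d).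
by case: ud sd' => U' d' sd'; apply: spec_pow_unique sd' sd.
Qed.

Lemma spec_decomp_qform {I : finType} (X U : op I) (d : vec I) :
  unitary U -> X = opmul (opmul U (opdiag d)) (opadj U) ->
  forall x, d x = qform X (fun z => U z x).
Proof.
move=> [UU1 UU2] XE x.
have : opmul (opadj U) (opmul X U) = opdiag d.
  by rewrite XE !opmulA UU2 opmul1r -opmulA UU2 opmul1l.
move/(congr1 (fun f => f x x)); rewrite /opdiag eqxx mul1r => <-.
rewrite /opmul /qform /opadj; apply: eq_bigr => z _; rewrite mulr_sumr.
by apply: eq_bigr => w _; rewrite mulrA.
Qed.

Definition op_of {I : finType} (M : 'M[F]_#|I|) : op I :=
  fun x y => M (enum_rank x) (enum_rank y).

Lemma op_of_mul {I : finType} (M N : 'M[F]_#|I|) :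
  op_of (M *m N) = opmul (op_of M) (op_of N).
Proof.
ext2; rewrite /op_of /opmul mxE (reindex (@enum_rank I)) //.
exact: onW_bij (enum_rank_bij I).
Qed.

Lemma op_of_1 {I : finType} : op_of (1%:M : 'M[F]_#|I|) = op1 F.
Proof. by ext2; rewrite /op_of /op1 mxE (inj_eq enum_rank_inj). Qed.

Lemma op_of_diag {I : finType} (sp : 'rV[F]_#|I|) :
  op_of (diag_mx sp) = opdiag (fun x => sp 0 (enum_rank x)).
Proof.
ext2; rewrite /op_of /opdiag mxE (inj_eq enum_rank_inj).
by case: eqP => [->|_]; rewrite ?mulr1n ?mul1r ?mulr0n ?mul0r.
Qed.

(* The spectral theorem, transported from MathComp's normal matrices *)
Lemma psd_spec_decomp {I : finType} (X : op I) :
  psd X -> exists U d, spec_decomp X (U, d).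
Proof.
move=> [Xh Xpsd].
pose A : 'M[F]_#|I| := \matrix_(i, j) X (enum_val i) (enum_val j).
have AX : op_of A = X by ext2; rewrite /op_of mxE !enum_rankK.
have Ah : map_mx Num.conj (trmx A) = A.
  apply/matrixP => i j; rewrite !mxE.
  by have := congr1 (fun f => f (enum_val i) (enum_val j)) Xh.
have An : A \is spectral.normalmx by apply/spectral.normalmxP; rewrite Ah.
have Pu := spectral.spectral_unitarymx A.
have AE := spectral.orthomx_spectralP An.
rewrite spectral.invmx_unitary // in AE.
set P := spectral.spectralmx A in AE Pu.
set sp := spectral.spectral_diag A in AE.
pose U : op I := op_of (map_mx Num.conj (trmx P)).
have PU : op_of P = opadj U by ext2; rewrite /opadj /U /op_of !mxE conjCK.
have Uu : unitary U.
  split; rewrite -PU -op_of_mul; last first.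
    by move/spectral.unitarymxP: Pu => ->; rewrite op_of_1.
  by rewrite -spectral.invmx_unitary // mulVmx ?op_of_1 // spectral.unitarymx_unit.
have XE : X = opmul (opmul U (opdiag (fun x => sp 0 (enum_rank x)))) (opadj U).
  by rewrite -AX {1}AE !op_of_mul op_of_diag PU.
exists U, (fun x => sp 0 (enum_rank x)); split => //; split => //= x.
by rewrite (spec_decomp_qform Uu XE).
Qed.

Lemma spec_decomp_psd {I : finType} (X U : op I) d : spec_decomp X (U, d) -> psd X.
Proof.
move=> [Uu [/= d0 /= XE]]; split; first by rewrite XE -spec_pow2; exact: spec_pow_hermitian.
move=> v; rewrite qformE XE !opapp_mul dot_adj.
set w := opapp (opadj U) v; rewrite /dot /opapp /opdiag.
apply: sumr_ge0 => i _; under eq_bigr do rewrite -mulrA.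
by rewrite sum_deltal mulrCA mulr_ge0 // -normCKC exprn_ge0.
Qed.

Section PsdPowers.
Variables (I : finType) (X : op I).
Hypothesis X_psd : psd X.

Lemma oppow_hermitian k : hermitian (oppow k X).
Proof.
have [U [d sd]] := psd_spec_decomp X_psd.
by rewrite /hermitian (oppowE k sd) spec_pow_hermitian //; case: sd => _ [].
Qed.

Lemma oppowD a b : opmul (oppow a X) (oppow b X) = oppow (a + b) X.
Proof.
have [U [d sd]] := psd_spec_decomp X_psd.
by rewrite !(oppowE _ sd) spec_powD //; case: sd.
Qed.

Lemma oppow2 : oppow 2 X = X.
Proof.
have [U [d sd]] := psd_spec_decomp X_psd.
by rewrite (oppowE 2 sd) spec_pow2; case: sd => _ [].
Qed.

(* [oppow 0 X] is the projection onto the support of X. *)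
Lemma qform_oppow0_le w : qform (oppow 0 X) w <= vnorm2 w.
Proof.
have [U [d sd]] := psd_spec_decomp X_psd.
have [[UU1 _] _] := sd; rewrite (oppowE 0 sd) qformE !opapp_mul dot_adj.
set u := opapp (opadj U) w.
have -> : vnorm2 w = dot u u by rewrite vnorm2E /u -dot_adj -opapp_mul UU1 opapp1.
rewrite /dot /opapp /opdiag; apply: ler_sum => i _.
under eq_bigr do rewrite -mulrA.
rewrite sum_deltal hpow0 mulrCA; case: (d i != 0); rewrite ?mul1r //.
by rewrite mul0r -normCKC exprn_ge0.
Qed.

End PsdPowers.

Lemma pd_psd {I : finType} (X : op I) : pd X -> psd X.
Proof.
move=> [Xh Xpd]; split => // v.
have [->|v_neq0] := classic (v = fun _ => 0); last exact/ltW/Xpd.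
by rewrite /qform big1 // => i _; rewrite big1 // => j _; rewrite mulr0.
Qed.

Lemma oppow0_pd {I : finType} (X : op I) : pd X -> oppow 0 X = op1 F.
Proof.
move=> Xpd; have [U [d sd]] := psd_spec_decomp (pd_psd Xpd).
have [[UU1 UU2] [_ /= XE]] := sd.
have d_gt0 i : 0 < d i.
  rewrite (spec_decomp_qform (conj UU1 UU2) XE); apply: (proj2 Xpd) => /= col0.
  have := congr1 (fun f => f i i) UU2; rewrite /opmul /op1 eqxx /=.
  rewrite big1 => [/eqP|k _]; first by rewrite eq_sym oner_eq0.
  by have /= -> := congr1 (fun f => f k) col0; rewrite mulr0.
rewrite (oppowE 0 sd) /spec_pow.
have -> : opdiag (fun i => hpow 0 (d i)) = op1 F by ext2; rewrite /opdiag hpow0 lt0r_neq0 ?mulr1.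
by rewrite opmul1r.
Qed.

End FunctionalCalculus.

Section StarMorphisms.
Variable F : numClosedFieldType.
Local Notation op := (op F).

(* Mapping diagonal operators to diagonal ones makes [phi] carry spectral
   decompositions to spectral decompositions, hence commute with [oppow]. *)
Definition star_morph {K L : finType} (phi : op K -> op L) (pi : L -> K) : Prop :=
  [/\ forall X Y, phi (opmul X Y) = opmul (phi X) (phi Y),
      forall X, phi (opadj X) = opadj (phi X),
      phi (op1 F) = op1 F &
      forall d, phi (opdiag d) = opdiag (fun l => d (pi l))].

Section StarMorphTheory.
Variables (K L : finType) (phi : op K -> op L) (pi : L -> K).
Hypothesis phi_morph : star_morph phi pi.

Lemma star_morph_spec_decomp (X U : op K) d : spec_decomp X (U, d) ->
  spec_decomp (phi X) (phi U, fun l => d (pi l)).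
Proof.
have [phiM phiV phi1 phiD] := phi_morph.
move=> [[/= UU1 UU2] [/= d0 /= XE]].
split; last by split=> //=; rewrite XE -phiD -phiV !phiM.
by split; rewrite /= -phiV -phiM ?UU1 ?UU2.
Qed.

Lemma psd_star_morph (X : op K) : psd X -> psd (phi X).
Proof.
move=> /psd_spec_decomp [U [d /star_morph_spec_decomp]]; exact: spec_decomp_psd.
Qed.

Lemma oppow_star_morph k (X : op K) : psd X -> oppow k (phi X) = phi (oppow k X).
Proof.
have [phiM phiV _ phiD] := phi_morph.
move=> /psd_spec_decomp [U [d sd]].
rewrite (oppowE k (star_morph_spec_decomp sd)) (oppowE k sd) /spec_pow.
by rewrite phiM phiM phiD phiV.
Qed.

End StarMorphTheory.

Lemma star_morph_comp {K L M : finType} (phi : op K -> op L) (psi : op L -> op M) pi rho :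
  star_morph phi pi -> star_morph psi rho ->
  star_morph (fun X => psi (phi X)) (fun m => pi (rho m)).
Proof.
move=> [phiM phiV phi1 phiD] [psiM psiV psi1 psiD].
by split=> [X Y|X||d]; rewrite ?phiM ?psiM ?phiV ?psiV ?phi1 ?psi1 // phiD psiD.
Qed.

Definition reindexop {I J : finType} (e : J -> I) (X : op I) : op J :=
  fun i j => X (e i) (e j).

Section Reindex.
Variables (I J : finType) (e : J -> I) (e' : I -> J).
Hypotheses (ee' : cancel e e') (e'e : cancel e' e).

Lemma sum_reindex (G : I -> F) : \sum_(i : I) G i = \sum_(j : J) G (e j).
Proof. by rewrite (reindex e) //; apply: onW_bij; exists e'. Qed.

Lemma reindexop_mul (X Y : op I) :
  reindexop e (opmul X Y) = opmul (reindexop e X) (reindexop e Y).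
Proof. by ext2; rewrite /opmul /reindexop sum_reindex. Qed.

Lemma reindexopK (X : op J) : reindexop e (reindexop e' X) = X.
Proof. by ext2; rewrite /reindexop !ee'. Qed.

Lemma star_morph_reindexop : star_morph (reindexop e) e.
Proof.
split=> [|//||d]; first exact: reindexop_mul.
  by ext2; rewrite /reindexop /op1 (inj_eq (can_inj ee')).
by ext2; rewrite /reindexop /opdiag (inj_eq (can_inj ee')).
Qed.

Lemma reindexop_psd (X : op I) : psd X -> psd (reindexop e X).
Proof.
move=> [Xh Xp]; split; first exact: (congr1 (reindexop e) Xh).
move=> v; have := Xp (fun i => v (e' i)); rewrite /qform sum_reindex.
under eq_bigr do rewrite sum_reindex.
by rewrite /reindexop; under eq_bigr do under eq_bigr do rewrite !ee'.
Qed.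

Lemma reindexop_sandwich (P X : op I) :
  reindexop e (sandwich P X) = sandwich (reindexop e P) (reindexop e X).
Proof. by rewrite /sandwich !reindexop_mul. Qed.

End Reindex.

Definition tensor_id_r {K D : finType} (X : op K) : op (K * D)%type :=
  fun i j => X i.1 j.1 * (i.2 == j.2)%:R.
Definition tensor_id_l {D K : finType} (X : op K) : op (D * K)%type :=
  fun i j => X i.2 j.2 * (i.1 == j.1)%:R.

Lemma tensor_id_r_mul {K D : finType} (X Y : op K) :
  tensor_id_r (opmul X Y) = opmul (tensor_id_r X : op (K * D)%type) (tensor_id_r Y).
Proof.
ext2; rewrite /opmul /tensor_id_r.
rewrite (eq_bigr (fun z => X i.1 z.1 * Y z.1 j.1 * ((i.2 == z.2)%:R * (z.2 == j.2)%:R)));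
  last by move=> z _; ring.
rewrite -(pair_bigA _ (fun k d => X i.1 k * Y k j.1 * ((i.2 == d)%:R * (d == j.2)%:R))) /=.
by rewrite big_distrl /=; apply: eq_bigr => k _; rewrite -mulr_sumr sum_deltal.
Qed.

Lemma tensor_id_r_adj {K D : finType} (X : op K) :
  tensor_id_r (opadj X) = opadj (tensor_id_r X : op (K * D)%type).
Proof. by ext2; rewrite /opadj /tensor_id_r rmorphM /= rmorph_nat eq_sym. Qed.

Lemma star_morph_tensor_id_r {K D : finType} :
  star_morph (@tensor_id_r K D) fst.
Proof.
split=> [X Y|X||d]; [exact: tensor_id_r_mul | exact: tensor_id_r_adj | |].
  by ext2; case: i j => [? ?] [? ?]; rewrite /tensor_id_r /op1 /= -natrM mulnb xpair_eqE.
ext2; case: i j => [? ?] [? ?].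
by rewrite /tensor_id_r /opdiag /= mulrAC -natrM mulnb -xpair_eqE.
Qed.

Lemma star_morph_tensor_id_l {D K : finType} :
  star_morph (@tensor_id_l D K) snd.
Proof.
have -> : @tensor_id_l D K = fun X => reindexop (fun p => (p.2, p.1)) (tensor_id_r X) by [].
apply: star_morph_comp star_morph_tensor_id_r
  (@star_morph_reindexop _ _ (fun p => (p.2, p.1)) (fun p => (p.2, p.1)) _ _); by case.
Qed.

Lemma psd_tensor_id_l {D K : finType} (X : op K) :
  psd X -> psd (tensor_id_l X : op (D * K)%type).
Proof. exact: psd_star_morph star_morph_tensor_id_l X. Qed.

Definition gatherAC {A B C : finType} (i : (A * B * C)%type) : ((A * C) * B)%type :=
  ((i.1.1, i.2), i.1.2).
Definition ungatherAC {A B C : finType} (p : ((A * C) * B)%type) : (A * B * C)%type :=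
  (p.1.1, p.2, p.1.2).
Definition gatherBC {A B C : finType} (i : (A * B * C)%type) : ((B * C) * A)%type :=
  ((i.1.2, i.2), i.1.1).
Definition ungatherBC {A B C : finType} (p : ((B * C) * A)%type) : (A * B * C)%type :=
  (p.2, p.1.1, p.1.2).

Section Tripartite.
Context {A B C : finType}.

Lemma gatherACK : cancel (@gatherAC A B C) ungatherAC. Proof. by case=> [[]]. Qed.
Lemma ungatherACK : cancel (@ungatherAC A B C) gatherAC. Proof. by case=> [[]]. Qed.
Lemma gatherBCK : cancel (@gatherBC A B C) ungatherBC. Proof. by case=> [[]]. Qed.
Lemma ungatherBCK : cancel (@ungatherBC A B C) gatherBC. Proof. by case=> [[]]. Qed.

Lemma embAC_tensor : @embAC F A B C = fun X => reindexop gatherAC (tensor_id_r X).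
Proof. by []. Qed.

Lemma embBC_tensor : @embBC F A B C = fun X => reindexop gatherBC (tensor_id_r X).
Proof. by []. Qed.

Lemma star_morph_embAC : star_morph (@embAC F A B C) (fun i => (gatherAC i).1).
Proof.
rewrite embAC_tensor.
exact: star_morph_comp star_morph_tensor_id_r (star_morph_reindexop gatherACK ungatherACK).
Qed.

Lemma star_morph_embBC : star_morph (@embBC F A B C) (fun i => (gatherBC i).1).
Proof.
rewrite embBC_tensor.
exact: star_morph_comp star_morph_tensor_id_r (star_morph_reindexop gatherBCK ungatherBCK).
Qed.

Lemma embAC_mul (X Y : op (A * C)%type) :
  embAC (opmul X Y) = opmul (embAC X) (embAC Y) :> op (A * B * C)%type.
Proof. by case: star_morph_embAC. Qed.

Lemma embAC_adj (X : op (A * C)%type) :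
  embAC (opadj X) = opadj (embAC X) :> op (A * B * C)%type.
Proof. by case: star_morph_embAC. Qed.

Lemma embAC1 : embAC (op1 F) = op1 F :> op (A * B * C)%type.
Proof. by case: star_morph_embAC. Qed.

Lemma embBC_mul (X Y : op (B * C)%type) :
  embBC (opmul X Y) = opmul (embBC X) (embBC Y) :> op (A * B * C)%type.
Proof. by case: star_morph_embBC. Qed.

Lemma embBC_adj (X : op (B * C)%type) :
  embBC (opadj X) = opadj (embBC X) :> op (A * B * C)%type.
Proof. by case: star_morph_embBC. Qed.

Lemma embBC1 : embBC (op1 F) = op1 F :> op (A * B * C)%type.
Proof. by case: star_morph_embBC. Qed.

Lemma psd_embAC (X : op (A * C)%type) : psd X -> psd (embAC X : op (A * B * C)%type).
Proof. exact: psd_star_morph star_morph_embAC X. Qed.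

Lemma psd_embBC (X : op (B * C)%type) : psd X -> psd (embBC X : op (A * B * C)%type).
Proof. exact: psd_star_morph star_morph_embBC X. Qed.

Lemma oppow_embAC k (X : op (A * C)%type) : psd X ->
  oppow k (embAC X) = embAC (oppow k X) :> op (A * B * C)%type.
Proof. exact: oppow_star_morph star_morph_embAC k X. Qed.

Lemma oppow_embBC k (X : op (B * C)%type) : psd X ->
  oppow k (embBC X) = embBC (oppow k X) :> op (A * B * C)%type.
Proof. exact: oppow_star_morph star_morph_embBC k X. Qed.

Lemma embC_embAC (X : op C) :
  embC X = embAC (tensor_id_l X : op (A * C)%type) :> op (A * B * C)%type.
Proof.
ext2; case: i j => [[a b] c] [[a' b'] c'].
by rewrite /embC /embAC /tensor_id_l /= -mulrA -natrM mulnb -xpair_eqE.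
Qed.

Lemma embC_embBC (X : op C) :
  embC X = embBC (tensor_id_l X : op (B * C)%type) :> op (A * B * C)%type.
Proof.
ext2; case: i j => [[a b] c] [[a' b'] c'].
by rewrite /embC /embBC /tensor_id_l /= -mulrA -natrM mulnb andbC -xpair_eqE.
Qed.

End Tripartite.

End StarMorphisms.

Section Channels.
Variable F : numClosedFieldType.
Local Notation op := (op F).

Section LinearMap.
Variables (D D' : finType) (M : op D -> op D').
Hypothesis M_lin : linear_map M.

Lemma linear_map0 : M (fun _ _ => 0) = fun _ _ => 0.
Proof.
have := M_lin 1 (fun _ _ => 0) (fun _ _ => 0).
rewrite (_ : (fun i j : D => 1 * 0 + 0) = fun _ _ => 0); last by ext2; rewrite mulr0 addr0.
move=> h; ext2; have /= := congr1 (fun f => f i j) h.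
by rewrite mul1r => e; apply: (addrI (M (fun _ _ => 0) i j)); rewrite addr0 -e.
Qed.

Lemma linear_mapZ c (X : op D) : M (fun a b => c * X a b) = fun a b => c * M X a b.
Proof.
have := M_lin c X (fun _ _ => 0); rewrite linear_map0.
rewrite (_ : (fun i j : D => c * X i j + 0) = fun a b => c * X a b); last by ext2; rewrite addr0.
by move=> ->; ext2; rewrite addr0.
Qed.

Lemma linear_mapB c (X Y : op D) :
  M (fun a b => c * X a b - Y a b) = fun a b => c * M X a b - M Y a b.
Proof.
have := M_lin c X (fun a b => -1 * Y a b); rewrite linear_mapZ.
rewrite (_ : (fun i j : D => c * X i j + -1 * Y i j) = fun a b => c * X a b - Y a b);
  last by ext2; rewrite mulN1r.
by move=> ->; ext2; rewrite mulN1r.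
Qed.

Lemma linear_map_sum (T : Type) (r : seq T) (c : T -> F) (Y : T -> op D) :
  M (fun a b => \sum_(k <- r) c k * Y k a b) = fun x y => \sum_(k <- r) c k * M (Y k) x y.
Proof.
elim: r => [|k r IH].
  rewrite (_ : (fun a b : D => \sum_(k <- [::]) c k * Y k a b) = fun _ _ => 0).
    by rewrite linear_map0; ext2; rewrite big_nil.
  by ext2; rewrite big_nil.
rewrite (_ : (fun a b : D => \sum_(k0 <- k :: r) c k0 * Y k0 a b) =
  fun a b => c k * Y k a b + (fun a b => \sum_(k0 <- r) c k0 * Y k0 a b) a b).
  by rewrite M_lin IH; ext2; rewrite big_cons.
by ext2; rewrite big_cons.
Qed.

End LinearMap.

Lemma sum_pair_delta {K D : finType} (a : D) (G : (K * D)%type -> F) :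
  \sum_(z : K * D) G z * (a == z.2)%:R = \sum_k G (k, a).
Proof.
rewrite (eq_bigr (fun z => G (z.1, z.2) * (a == z.2)%:R)); last by case.
rewrite -(pair_bigA _ (fun k d => G (k, d) * (a == d)%:R)) /=.
apply: eq_bigr => k _; rewrite -(sum_deltal a (fun d => G (k, d))).
by apply: eq_bigr => d _; rewrite mulrC.
Qed.

Section Amplification.
Variables (K D D' : finType) (M : op D -> op D').

Lemma ampl_mull (g : op K) (W : op (K * D)%type) : linear_map M ->
  ampl M (opmul (tensor_id_r g) W) = opmul (tensor_id_r g) (ampl M W).
Proof.
move=> M_lin; ext2; rewrite /ampl /opmul /tensor_id_r /=.
rewrite (_ : (fun d d' => \sum_(z : K * D) g i.1 z.1 * ((i.1, d).2 == z.2)%:R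
     * W z ((j.1, d').1, d')) =
  fun d d' => \sum_k g i.1 k * (fun d d' => W (k, d) (j.1, d')) d d').
  rewrite (linear_map_sum M_lin (index_enum K) (g i.1) (fun k d d' => W (k, d) (j.1, d'))).
  rewrite -(sum_pair_delta i.2 (fun z => g i.1 z.1 * M (fun d d' => W (z.1, d) (j.1, d')) z.2 j.2)).
  by apply: eq_bigr => z _ /=; rewrite mulrAC.
ext2; rewrite -(sum_pair_delta i0 (fun z => g i.1 z.1 * W z (j.1, j0))).
by apply: eq_bigr => z _ /=; rewrite mulrAC.
Qed.

Lemma ampl_mulr (h : op K) (W : op (K * D)%type) : linear_map M ->
  ampl M (opmul W (tensor_id_r h)) = opmul (ampl M W) (tensor_id_r h).
Proof.
move=> M_lin; ext2; rewrite /ampl /opmul /tensor_id_r /=.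
rewrite (_ : (fun d d' => \sum_(z : K * D) W (i.1, d) z * (h z.1 j.1 * (z.2 == d')%:R)) =
  fun d d' => \sum_k h k j.1 * (fun d d' => W (i.1, d) (k, d')) d d').
  rewrite (linear_map_sum M_lin (index_enum K) (h^~ j.1) (fun k d d' => W (i.1, d) (k, d'))).
  rewrite -(sum_pair_delta j.2 (fun z => h z.1 j.1 * M (fun d d' => W (i.1, d) (z.1, d')) i.2 z.2)).
  by apply: eq_bigr => z _ /=; rewrite eq_sym; ring.
ext2; rewrite -(sum_pair_delta j0 (fun z => h z.1 j.1 * W (i.1, i0) z)).
by apply: eq_bigr => z _ /=; rewrite eq_sym; ring.
Qed.

Lemma ampl_sandwich (g : op K) (W : op (K * D)%type) : linear_map M ->
  ampl M (sandwich (tensor_id_r g) W) = sandwich (tensor_id_r g) (ampl M W).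
Proof. by move=> M_lin; rewrite /sandwich -!tensor_id_r_adj ampl_mulr // ampl_mull. Qed.

Lemma ampl_psd (W : op (K * D)%type) :
  completely_positive M -> psd W -> psd (ampl M W).
Proof.
pose g (p : ('I_#|K| * D)%type) := (enum_val p.1, p.2).
pose g' (q : (K * D)%type) := (enum_rank q.1, q.2).
pose h (p : ('I_#|K| * D')%type) := (enum_val p.1, p.2).
pose h' (q : (K * D')%type) := (enum_rank q.1, q.2).
have gK : cancel g g' by case=> a b; rewrite /g /g' /= enum_valK.
have g'K : cancel g' g by case=> a b; rewrite /g /g' /= enum_rankK.
have hK : cancel h h' by case=> a b; rewrite /h /h' /= enum_valK.
have h'K : cancel h' h by case=> a b; rewrite /h /h' /= enum_rankK.
move=> M_cp W_psd; have := M_cp _ _ (reindexop_psd gK g'K W_psd).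
rewrite (_ : ampl M (reindexop g W) = reindexop h (ampl M W)) //.
by move/(reindexop_psd h'K hK); rewrite reindexopK.
Qed.

End Amplification.

Section TripartiteChannels.
Context {A A' B B' C : finType}.

Lemma chanB_ampl (M : op B -> op B') (X : op (A * B * C)%type) :
  chanB M X = reindexop gatherAC (ampl M (reindexop ungatherAC X)).
Proof. by []. Qed.

Lemma chanA_ampl (N : op A -> op A') (X : op (A * B * C)%type) :
  chanA N X = reindexop gatherBC (ampl N (reindexop ungatherBC X)).
Proof. by []. Qed.

Lemma chanB_psd (M : op B -> op B') (X : op (A * B * C)%type) :
  completely_positive M -> psd X -> psd (chanB M X).
Proof.
move=> M_cp X_psd; rewrite chanB_ampl.
by apply/(reindexop_psd gatherACK ungatherACK)/ampl_psd/(reindexop_psd ungatherACK gatherACK).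
Qed.

Lemma chanA_psd (N : op A -> op A') (X : op (A * B * C)%type) :
  completely_positive N -> psd X -> psd (chanA N X).
Proof.
move=> N_cp X_psd; rewrite chanA_ampl.
by apply/(reindexop_psd gatherBCK ungatherBCK)/ampl_psd/(reindexop_psd ungatherBCK gatherBCK).
Qed.

Lemma chanB_linB (M : op B -> op B') c (X Y : op (A * B * C)%type) : linear_map M ->
  chanB M (fun i j => c * X i j - Y i j) = fun i j => c * chanB M X i j - chanB M Y i j.
Proof. by move=> M_lin; ext2; rewrite /chanB linear_mapB. Qed.

Lemma chanA_linB (N : op A -> op A') c (X Y : op (A * B * C)%type) : linear_map N ->
  chanA N (fun i j => c * X i j - Y i j) = fun i j => c * chanA N X i j - chanA N Y i j.
Proof. by move=> N_lin; ext2; rewrite /chanA linear_mapB. Qed.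

Lemma chanB_sandwich_embAC (M : op B -> op B') (g : op (A * C)%type) (W : op (A * B * C)%type) :
  linear_map M -> chanB M (sandwich (embAC g) W) = sandwich (embAC g) (chanB M W).
Proof.
move=> M_lin; rewrite [LHS]chanB_ampl !embAC_tensor /=.
rewrite (reindexop_sandwich ungatherACK gatherACK) reindexopK; last exact: ungatherACK.
by rewrite ampl_sandwich // (reindexop_sandwich gatherACK ungatherACK).
Qed.

Lemma chanA_sandwich_embBC (N : op A -> op A') (g : op (B * C)%type) (W : op (A * B * C)%type) :
  linear_map N -> chanA N (sandwich (embBC g) W) = sandwich (embBC g) (chanA N W).
Proof.
move=> N_lin; rewrite [LHS]chanA_ampl !embBC_tensor /=.
rewrite (reindexop_sandwich ungatherBCK gatherBCK) reindexopK; last exact: ungatherBCK.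
by rewrite ampl_sandwich // (reindexop_sandwich gatherBCK ungatherBCK).
Qed.

Lemma chanB_embBC (M : op B -> op B') (X : op (B * C)%type) : linear_map M ->
  chanB M (embBC X : op (A * B * C)%type) = embBC (chan1 M X).
Proof.
move=> M_lin; ext2; rewrite /chanB /embBC /chan1 /=.
rewrite (_ : (fun b b' => X (b, i.2) (b', j.2) * (i.1.1 == j.1.1)%:R) =
  fun b b' => (i.1.1 == j.1.1)%:R * X (b, i.2) (b', j.2)); last by ext2; rewrite mulrC.
by rewrite linear_mapZ // mulrC.
Qed.

Lemma chanA_embAC (N : op A -> op A') (X : op (A * C)%type) : linear_map N ->
  chanA N (embAC X : op (A * B * C)%type) = embAC (chan1 N X).
Proof.
move=> N_lin; ext2; rewrite /chanA /embAC /chan1 /=.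
rewrite (_ : (fun a a' => X (a, i.2) (a', j.2) * (i.1.2 == j.1.2)%:R) =
  fun a a' => (i.1.2 == j.1.2)%:R * X (a, i.2) (a', j.2)); last by ext2; rewrite mulrC.
by rewrite linear_mapZ // mulrC.
Qed.

End TripartiteChannels.

End Channels.

Section Loewner.
Variable F : numClosedFieldType.
Local Notation op := (op F).

Definition loewner_le {I : finType} (X Y : op I) : Prop := psd (fun i j => Y i j - X i j).
Definition opscale {I : finType} (c : F) (X : op I) : op I := fun i j => c * X i j.

Lemma qform_opscale {I : finType} c (X : op I) u : qform (opscale c X) u = c * qform X u.
Proof.
rewrite /qform mulr_sumr; apply: eq_bigr => i _.
by rewrite mulr_sumr; apply: eq_bigr => j _; rewrite /opscale; ring.
Qed.

Lemma opscale_hermitian {I : finType} c (X : op I) :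
  0 <= c -> hermitian X -> hermitian (opscale c X).
Proof.
move=> c0 Xh; rewrite /hermitian; ext2; rewrite /opadj /opscale rmorphM /= geC0_conj //.
by have /= <- := congr1 (fun f => f i j) Xh.
Qed.

Lemma loewner_leP {I : finType} (X Y : op I) : hermitian X -> hermitian Y ->
  loewner_le X Y <-> forall u, qform X u <= qform Y u.
Proof.
have qformB u : qform (fun i j => Y i j - X i j) u = qform Y u - qform X u.
  rewrite /qform -sumrB; apply: eq_bigr => i _.
  by rewrite -sumrB; apply: eq_bigr => j _; ring.
move=> Xh Yh; split=> [[_ H] u|H]; first by rewrite -subr_ge0 -qformB.
split=> [|u]; last by rewrite qformB subr_ge0.
rewrite /hermitian; ext2; rewrite /opadj rmorphB /=.
by have /= <- := congr1 (fun f => f i j) Xh; have /= <- := congr1 (fun f => f i j) Yh.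
Qed.

Lemma loewner_le_map {I J : finType} (Phi : op I -> op J) c (W Z : op I) :
  (forall X Y, Phi (fun i j => c * X i j - Y i j) = fun i j => c * Phi X i j - Phi Y i j) ->
  (forall X, psd X -> psd (Phi X)) ->
  loewner_le W (opscale c Z) -> loewner_le (Phi W) (opscale c (Phi Z)).
Proof. by move=> Phi_lin Phi_psd /Phi_psd; rewrite /opscale Phi_lin. Qed.

End Loewner.

Section DmaxLoewner.
Variable F : numClosedFieldType.
Local Notation op := (op F).

Lemma Kminus1_sandwich {I : finType} (X Y Z : (op I * otype)%type) :
  hermitian (oppow (- esign X.2) X.1) -> hermitian (oppow (- esign Y.2) Y.1) ->
  Kminus1 X Y Z = sandwich (opmul (oppow (- esign X.2) X.1) (oppow (- esign Y.2) Y.1))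
                           (oppow (- (2 * esign Z.2)) Z.1).
Proof. by move=> hX hY; rewrite /Kminus1 /sandwich opadj_mul hX hY !opmulA. Qed.

Section Factorisation.
Variables (I : finType) (rho Z P : op I).
Hypotheses (rho_psd : psd rho) (Z_psd : psd Z).

Local Notation S := (oppow (-1) Z).
Local Notation T := (opmul (opmul S (opadj P)) (oppow 1 rho)).

Let S_hermitian : opadj S = S := oppow_hermitian Z_psd (-1).

Let adjT_T :
  opmul (opadj T) T = opmul (opmul (oppow 1 rho) (sandwich P (oppow (-2) Z))) (oppow 1 rho).
Proof.
rewrite /sandwich opadj_mul (oppow_hermitian rho_psd) opadj_mul opadjK S_hermitian.
by rewrite -(oppowD Z_psd (-1) (-1)) !opmulA.
Qed.

Let T_adjT : opmul T (opadj T) = sandwich S (sandwich (opadj P) rho).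
Proof.
rewrite /sandwich opadj_mul (oppow_hermitian rho_psd) opadj_mul opadjK S_hermitian.
by rewrite -[in RHS](oppow2 rho_psd) -(oppowD rho_psd 1 1) !opmulA.
Qed.

Lemma loewner_le_of_expDmax_le c : oppow 0 Z = op1 F -> 0 <= c ->
  opnorm_le (opmul (opmul (oppow 1 rho) (sandwich P (oppow (-2) Z))) (oppow 1 rho)) c ->
  loewner_le (sandwich (opadj P) rho) (opscale c Z).
Proof.
move=> Z0 c0; rewrite -adjT_T opnorm_le_adjmulP // => /(op_bounded_adj c0) adjT_bounded.
apply/loewner_leP => [||u].
- by apply: sandwich_hermitian; case: rho_psd.
- by apply: opscale_hermitian => //; case: Z_psd.
have := adjT_bounded (opapp (oppow 1 Z) u).
rewrite vnorm2_app opadjK T_adjT qform_sandwich S_hermitian -opapp_mul (oppowD Z_psd).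
rewrite Z0 opapp1 vnorm2_app (oppow_hermitian Z_psd) (oppowD Z_psd) (oppow2 Z_psd).
by rewrite qform_opscale.
Qed.

Lemma expDmax_le_of_loewner_le c : 0 <= c ->
  loewner_le (sandwich (opadj P) rho) (opscale c Z) ->
  opnorm_le (opmul (opmul (oppow 1 rho) (sandwich P (oppow (-2) Z))) (oppow 1 rho)) c.
Proof.
move=> c0 H; rewrite -adjT_T opnorm_le_adjmulP // -[X in op_bounded X]opadjK.
apply: op_bounded_adj => // w; rewrite vnorm2_app opadjK T_adjT qform_sandwich.
have W_hermitian : hermitian (sandwich (opadj P) rho).
  by apply: sandwich_hermitian; case: rho_psd.
have cZ_hermitian : hermitian (opscale c Z) by apply: opscale_hermitian => //; case: Z_psd.
apply: le_trans ((proj1 (loewner_leP W_hermitian cZ_hermitian) H) _) _.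
(* Z^{-1/2} Z Z^{-1/2} is the support projection of Z *)
rewrite qform_opscale -qform_sandwich /sandwich S_hermitian -{2}(oppow2 Z_psd).
rewrite !(oppowD Z_psd) ler_wpM2l //; exact: qform_oppow0_le.
Qed.

End Factorisation.

Lemma expDmax_le_positive_map {I J : finType} (Phi : op I -> op J)
    (rho Z P : op I) (P' : op J) c :
  psd rho -> psd Z -> oppow 0 Z = op1 F -> psd (Phi rho) -> psd (Phi Z) -> 0 <= c ->
  (forall W, loewner_le W (opscale c Z) -> loewner_le (Phi W) (opscale c (Phi Z))) ->
  Phi (sandwich (opadj P) rho) = sandwich (opadj P') (Phi rho) ->
  opnorm_le (opmul (opmul (oppow 1 rho) (sandwich P (oppow (-2) Z))) (oppow 1 rho)) c ->
  opnorm_le (opmul (opmul (oppow 1 (Phi rho)) (sandwich P' (oppow (-2) (Phi Z))))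
    (oppow 1 (Phi rho))) c.
Proof.
move=> rho_psd Z_psd Z0 Phi_rho_psd Phi_Z_psd c0 Phi_mono Phi_P H.
apply: expDmax_le_of_loewner_le => //; rewrite -Phi_P; apply: Phi_mono.
exact: loewner_le_of_expDmax_le.
Qed.

End DmaxLoewner.

Section DataProcessing.
Variable F : numClosedFieldType.
Local Notation op := (op F).
Context {A A' B B' C : finType}.

Lemma expDmax_le_chanB (rho : op (A * B * C)%type) (theta : op (B * C)%type)
    (M : op B -> op B') (g : op (A * C)%type) c :
  psd rho -> pd theta -> channel M -> 0 <= c ->
  opnorm_le (opmul (opmul (oppow 1 rho) (sandwich (embAC g) (oppow (-2) (embBC theta))))
    (oppow 1 rho)) c ->
  opnorm_le (opmul (opmul (oppow 1 (chanB M rho))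
    (sandwich (embAC g) (oppow (-2) (embBC (chan1 M theta))))) (oppow 1 (chanB M rho))) c.
Proof.
move=> rho_psd theta_pd [M_lin M_cp _] c0.
have theta_psd := pd_psd theta_pd.
rewrite -chanB_embBC //; apply: expDmax_le_positive_map => //.
- exact: psd_embBC.
- by rewrite oppow_embBC // oppow0_pd // embBC1.
- exact: chanB_psd.
- by apply: chanB_psd => //; exact: psd_embBC.
- by move=> W; apply: loewner_le_map; [move=> X Y; exact: chanB_linB | move=> X; exact: chanB_psd].
- by rewrite -!embAC_adj chanB_sandwich_embAC.
Qed.

Lemma expDmax_le_chanA (rho : op (A * B * C)%type) (tau : op (A * C)%type)
    (N : op A -> op A') (g : op (B * C)%type) c :
  psd rho -> pd tau -> channel N -> 0 <= c ->
  opnorm_le (opmul (opmul (oppow 1 rho) (sandwich (embBC g) (oppow (-2) (embAC tau))))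
    (oppow 1 rho)) c ->
  opnorm_le (opmul (opmul (oppow 1 (chanA N rho))
    (sandwich (embBC g) (oppow (-2) (embAC (chan1 N tau))))) (oppow 1 (chanA N rho))) c.
Proof.
move=> rho_psd tau_pd [N_lin N_cp _] c0.
have tau_psd := pd_psd tau_pd.
rewrite -chanA_embAC //; apply: expDmax_le_positive_map => //.
- exact: psd_embAC.
- by rewrite oppow_embAC // oppow0_pd // embAC1.
- exact: chanA_psd.
- by apply: chanA_psd => //; exact: psd_embAC.
- by move=> W; apply: loewner_le_map; [move=> X Y; exact: chanA_linB | move=> X; exact: chanA_psd].
- by rewrite -!embBC_adj chanA_sandwich_embBC.
Qed.

Lemma Dmax_geq_chanB (rho : op (A * B * C)%type) (theta : op (B * C)%type)
    (M : op B -> op B') (x y : op (A * C)%type) (s t : otype) :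
  psd rho -> pd theta -> channel M -> psd x -> psd y ->
  Dmax_geq rho (embAC x, s) (embAC y, t) (embBC theta, Theta)
    (chanB M rho) (embAC x, s) (embAC y, t) (embBC (chan1 M theta), Theta).
Proof.
move=> rho_psd theta_pd M_ch x_psd y_psd c c0.
rewrite /expDmax_le !Kminus1_sandwich /=.
rewrite !oppow_embAC // -!embAC_mul.
exact: expDmax_le_chanB.
all: by apply: oppow_hermitian; exact: psd_embAC.
Qed.

Lemma Dmax_geq_chanA (rho : op (A * B * C)%type) (tau : op (A * C)%type)
    (N : op A -> op A') (x y : op (B * C)%type) (s t : otype) :
  psd rho -> pd tau -> channel N -> psd x -> psd y ->
  Dmax_geq rho (embBC x, s) (embBC y, t) (embAC tau, Tau)
    (chanA N rho) (embBC x, s) (embBC y, t) (embAC (chan1 N tau), Tau).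
Proof.
move=> rho_psd tau_pd N_ch x_psd y_psd c c0.
rewrite /expDmax_le !Kminus1_sandwich /=.
rewrite !oppow_embBC // -!embBC_mul.
exact: expDmax_le_chanA.
all: by apply: oppow_hermitian; exact: psd_embBC.
Qed.

End DataProcessing.

Theorem mainTheorem15 (F : numClosedFieldType) (A B C A' B' : finType)
  (rho : op F (A * B * C)%type) (tau : op F (A * C)%type) (theta : op F (B * C)%type)
  (omega : op F C) (N : op F A -> op F A') (M : op F B -> op F B') :
  pd_density rho -> pd_density tau -> pd_density theta -> pd_density omega ->
  channel N -> channel M ->
  [/\ Dmax_geq rho (embAC tau, Tau) (embC omega, Omega) (embBC theta, Theta)
        (chanB M rho) (embAC tau, Tau) (embC omega, Omega)
        (embBC (chan1 M theta), Theta),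
      Dmax_geq rho (embC omega, Omega) (embAC tau, Tau) (embBC theta, Theta)
        (chanB M rho) (embC omega, Omega) (embAC tau, Tau)
        (embBC (chan1 M theta), Theta),
      Dmax_geq rho (embC omega, Omega) (embBC theta, Theta) (embAC tau, Tau)
        (chanA N rho) (embC omega, Omega) (embBC theta, Theta)
        (embAC (chan1 N tau), Tau)
    & Dmax_geq rho (embBC theta, Theta) (embC omega, Omega) (embAC tau, Tau)
        (chanA N rho) (embBC theta, Theta) (embC omega, Omega)
        (embAC (chan1 N tau), Tau)].
Proof.
move=> [rho_pd _] [tau_pd _] [theta_pd _] [omega_pd _] N_ch M_ch.
have rho_psd := pd_psd rho_pd.
have tau_psd := pd_psd tau_pd.
have theta_psd := pd_psd theta_pd.
have omega_psd (D : finType) : psd (tensor_id_l omega : op F (D * C)%type).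
  exact/psd_tensor_id_l/pd_psd.
split.
- by rewrite !embC_embAC; apply: Dmax_geq_chanB.
- by rewrite !embC_embAC; apply: Dmax_geq_chanB.
- by rewrite !embC_embBC; apply: Dmax_geq_chanA.
- by rewrite !embC_embBC; apply: Dmax_geq_chanA.
Qed.
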